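(* For every integer $k\geqslant 1$, there exists a finite word $W$ over a $3$-letter alphabet with $r(W)\geqslant k$.
   Context: A square is a finite non-empty word of the form $XX$; a word is square-free if it has no square factor. A square reduction replaces a word $UXXV$ (with $X$ non-empty) by $UXV$. A reduct of $W$ is any square-free word obtainable from $W$ by a finite sequence of square reductions, and $r(W)$ is the number of distinct reducts of $W$. *)

From mathcomp Require Import all_boot.
Set Implicit Arguments. Unset Strict Implicit. Unset Printing Implicit Defensive.

Definition is_square (T : eqType) (w : seq T) : Prop :=
  exists X : seq T, X <> [::] /\ w = X ++ X.

Definition square_free (T : eqType) (w : seq T) : Prop :=
  forall U X V : seq T, X <> [::] -> w <> U ++ X ++ X ++ V.

Definition sq_step (T : eqType) (w w' : seq T) : Prop :=
  exists U X V : seq T, X <> [::] /\ w = U ++ X ++ X ++ V /\ w' = U ++ X ++ V.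

Inductive sq_reduces (T : eqType) : seq T -> seq T -> Prop :=
| sq_refl w : sq_reduces w w
| sq_trans w w' w'' : sq_step w w' -> sq_reduces w' w'' -> sq_reduces w w''.

Definition is_reduct (T : eqType) (W R : seq T) : Prop :=
  sq_reduces W R /\ square_free R.

Definition r_ge (T : eqType) (W : seq T) (k : nat) : Prop :=
  exists s : seq (seq T), uniq s /\ k <= size s /\ forall R, R \in s -> is_reduct W R.

From mathcomp Require Import all_boot zify.
Set Implicit Arguments. Unset Strict Implicit. Unset Printing Implicit Defensive.

(* Let h be Leech's 13-uniform square-free morphism on {0,1,2} and cut each
   image as h(x) = a b c d with |a| = 2, |b| = 4, |c| = 3, |d| = 4.  Then
   g(x) = a b c b a b c d is a 26-uniform square-free morphism, and
   D(x) = a b a b c b a b c d reduces both to h(x) and to g(x).  If R_1, ..., R_k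
   are distinct reducts of W and R_1 is a longest one, then D(W) has the k + 1
   distinct reducts h(R_1), ..., h(R_k), g(R_1), the last being strictly longer
   than the others.  Iterating from a one-letter word gives words with
   arbitrarily many reducts.
   Square-freeness of h and g follows from a finite check: a uniform morphism
   whose images have distinct first letters, never occur inside the image of a
   two-letter word off the block boundaries, and which maps square-free words of
   length at most 5 to square-free words, is square-free.  Indeed a long square
   in f(w) must then be block-aligned, hence the image of a square of w, while a
   short one lies inside the image of a factor of length 5. *)

Lemma take_drop_take (A : Type) (s : seq A) n j k :
  j + k <= n -> take k (drop j (take n s)) = take k (drop j s).
Proof. by move=> le_n; rewrite !take_drop take_takel // addnC. Qed.

Lemma take1_drop (A : Type) (s : seq A) i :
  i < size s -> exists a, take 1 (drop i s) = [:: a].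
Proof.
move=> lt_i; case def_s: (drop i s) => [|a t]; last by exists a; rewrite /= take0.
by move: lt_i; rewrite -subn_gt0 -size_drop def_s.
Qed.

Lemma eq_take_drop (A : Type) (s : seq A) i j n :
    (forall t, t < n -> take 1 (drop (i + t) s) = take 1 (drop (j + t) s)) ->
  take n (drop i s) = take n (drop j s).
Proof.
elim: n i j => [|n IH] i j eq1; first by rewrite !take0.
rewrite -add1n !takeD !drop_drop; have := eq1 0 isT; rewrite !addn0 => ->.
by congr cat; apply: IH => t lt_tn; rewrite !add1n !addSnnS eq1.
Qed.

Section Morphisms.
Variables (S T : eqType).

Definition morph (f : S -> seq T) (w : seq S) : seq T := flatten (map f w).

Definition uniform (f : S -> seq T) (m : nat) := forall a, size (f a) = m.

Lemma morph_cat f u v : morph f (u ++ v) = morph f u ++ morph f v.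
Proof. by rewrite /morph map_cat flatten_cat. Qed.

Lemma morph_cons f a w : morph f (a :: w) = f a ++ morph f w.
Proof. by []. Qed.

Lemma morph_seq1 f a : morph f [:: a] = f a.
Proof. exact: cats0. Qed.

Variables (f : S -> seq T) (m : nat).
Hypothesis f_unif : uniform f m.

Lemma size_morph w : size (morph f w) = size w * m.
Proof. by elim: w => //= a w IH; rewrite size_cat f_unif IH mulSn. Qed.

Lemma morph_drop i w : drop (i * m) (morph f w) = morph f (drop i w).
Proof.
elim: w i => [|a w IH] [|i] //; rewrite ?mul0n ?drop0 // morph_cons.
by rewrite mulSn addnC -drop_drop drop_size_cat.
Qed.

Lemma morph_take i w : take (i * m) (morph f w) = morph f (take i w).
Proof.
elim: w i => [|a w IH] [|i] //; rewrite ?mul0n ?take0 // morph_cons.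
by rewrite mulSn takeD take_size_cat // drop_size_cat // IH.
Qed.

Lemma morph_window k i w :
  take (k * m) (drop (i * m) (morph f w)) = morph f (take k (drop i w)).
Proof. by rewrite morph_drop morph_take. Qed.

Lemma morph_inj : 0 < m -> injective f -> injective (morph f).
Proof.
move=> m_gt0 f_inj; elim=> [|a u IH] [|b v] // /eqP; rewrite ?morph_cons.
- by rewrite eq_sym -size_eq0 size_cat f_unif; case: m m_gt0.
- by rewrite -size_eq0 size_cat f_unif; case: m m_gt0.
by rewrite eqseq_cat ?f_unif // => /andP[/eqP/f_inj-> /eqP/IH->].
Qed.

End Morphisms.

Section Reductions.
Variable T : eqType.

Lemma sq_reduces_trans (u v w : seq T) :
  sq_reduces u v -> sq_reduces v w -> sq_reduces u w.
Proof. by elim=> // u1 u2 u3 st _ IH /IH; apply: sq_trans. Qed.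

Lemma sq_reduces_square (U X V : seq T) :
  X != [::] -> sq_reduces (U ++ X ++ X ++ V) (U ++ X ++ V).
Proof. by move/eqP=> nzX; apply/(sq_trans _ (sq_refl _)); exists U, X, V. Qed.

Lemma sq_reduces_cat (P Q u v : seq T) :
  sq_reduces u v -> sq_reduces (P ++ u ++ Q) (P ++ v ++ Q).
Proof.
elim=> [w|u1 u2 u3 [U [X [V [nzX [-> ->]]]]] _ IH]; first exact: sq_refl.
by apply: sq_trans IH; exists (P ++ U), X, (V ++ Q); rewrite -!catA.
Qed.

Lemma sq_reduces_morph (S : eqType) (f : S -> seq T) u v :
  (forall a, f a != [::]) -> sq_reduces u v -> sq_reduces (morph f u) (morph f v).
Proof.
move=> f_nz; elim=> [w|u1 u2 u3 [U [[|a X] [V [nzX [-> ->]]]]] _ IH] //.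
  exact: sq_refl.
apply: sq_trans IH; exists (morph f U), (morph f (a :: X)), (morph f V).
by rewrite !morph_cat morph_cons; split=> //; case: (f a) (f_nz a).
Qed.

Lemma sq_reduces_subst (S : eqType) (f g : S -> seq T) w :
  (forall a, sq_reduces (f a) (g a)) -> sq_reduces (morph f w) (morph g w).
Proof.
move=> fg; elim: w => [|a w IH]; first exact: sq_refl.
rewrite !morph_cons; apply: (@sq_reduces_trans _ (g a ++ morph f w)).
  exact: (sq_reduces_cat [::] _ (fg a)).
by have := sq_reduces_cat (g a) [::] IH; rewrite !cats0.
Qed.

Lemma is_reduct_morph (S : eqType) (D f : S -> seq T) W R :
    (forall a, sq_reduces (D a) (f a)) -> (forall a, f a != [::]) ->
    (forall w, square_free w -> square_free (morph f w)) ->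
  is_reduct W R -> is_reduct (morph D W) (morph f R).
Proof.
move=> Df f_nz f_sf [red_WR sf_R]; split; last exact: f_sf.
exact: sq_reduces_trans (sq_reduces_subst W Df) (sq_reduces_morph f_nz red_WR).
Qed.

End Reductions.

Section Squares.
Variable T : eqType.
Implicit Types s : seq T.

Definition square_at s p L : bool :=
  [&& 0 < L, p + 2 * L <= size s & take L (drop p s) == take L (drop (p + L) s)].

Definition has_square s : bool :=
  has (fun p => has (square_at s p) (iota 1 (size s - p)./2)) (iota 0 (size s)).

Lemma has_squareP s : reflect (exists p L, square_at s p L) (has_square s).
Proof.
apply: (iffP hasP) => [[p _ /hasP[L _ sq]]|[p [L sq]]]; first by exists p, L.
have /and3P[L_gt0 le_s _] := sq.
exists p; first by rewrite mem_iota; lia.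
by apply/hasP; exists L; first by rewrite mem_iota; lia.
Qed.

Lemma square_at_cat U X V :
  X != [::] -> square_at (U ++ X ++ X ++ V) (size U) (size X).
Proof.
move=> nzX; rewrite /square_at lt0n size_eq0 nzX !size_cat.
rewrite [size U + size X]addnC -drop_drop !drop_size_cat // !take_size_cat //=.
by rewrite eqxx andbT; lia.
Qed.

Lemma square_atE s p L : square_at s p L ->
  s = take p s ++ take L (drop p s) ++ take L (drop p s) ++ drop (p + 2 * L) s.
Proof.
case/and3P=> _ _ /eqP sq; have -> : p + 2 * L = L + (L + p) by lia.
by rewrite {2}sq (addnC p L) -!drop_drop !cat_take_drop.
Qed.

Lemma square_freeP s : reflect (square_free s) (~~ has_square s).
Proof.
apply: (iffP negP) => [nsq U X V /eqP nzX def_s | sf /has_squareP[p [L sq]]].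
  by apply: nsq; apply/has_squareP; exists (size U), (size X); rewrite def_s square_at_cat.
apply: sf (square_atE sq); have /and3P[L_gt0 le_s _] := sq.
by move/(congr1 size); rewrite size_takel ?size_drop /=; lia.
Qed.

Lemma square_at_drop d s p L : square_at (drop d s) p L = square_at s (d + p) L.
Proof.
rewrite /square_at size_drop !drop_drop (addnC p d) (addnC (p + L) d) addnA.
by apply/and3P/and3P=> -[L_gt0 le_s ->]; split=> //; lia.
Qed.

Lemma square_at_take n s p L :
  p + 2 * L <= n -> square_at (take n s) p L = square_at s p L.
Proof.
move=> le_n; rewrite /square_at size_take_min leq_min le_n.
by rewrite !take_drop_take //; lia.
Qed.

Lemma square_at_window s p L j k : square_at s p L -> j + k <= L ->
  take k (drop (p + j) s) = take k (drop (p + L + j) s).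
Proof.
case/and3P=> _ _ /eqP sq le_L; have := congr1 (fun t => take k (drop j t)) sq.
by rewrite /= !take_drop_take // !drop_drop !(addnC j).
Qed.

Lemma has_square_factor n d s : has_square (take n (drop d s)) -> has_square s.
Proof.
case/has_squareP=> p [L sq]; apply/has_squareP; exists (d + p), L.
have /and3P[_ + _] := sq; rewrite size_take_min leq_min => /andP[le_n _].
by rewrite -square_at_drop -(square_at_take _ le_n).
Qed.

End Squares.

Section Criterion.
Variables (S T : eqType) (f : S -> seq T) (m : nat).

Definition synchronizing :=
  forall a b c r, 0 < r < m -> take m (drop r (f a ++ f b)) != f c.

Hypotheses (m_gt0 : 0 < m) (f_unif : uniform f m) (f_sync : synchronizing)
  (f_head_inj : injective (fun a => take 1 (f a)))
  (f_short : forall u, size u <= 5 -> has_square (morph f u) -> has_square u).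

Lemma exists_mul_in p : exists c, p <= c * m < p + m.
Proof.
exists ((p + m.-1) %/ m).
have := divn_eq (p + m.-1) m; have := ltn_pmod (p + m.-1) m_gt0; lia.
Qed.

Lemma morph_letter w i : i < size w ->
  exists2 a, take 1 (drop i w) = [:: a] & take m (drop (i * m) (morph f w)) = f a.
Proof.
move=> lt_i; have [a def_a] := take1_drop lt_i; exists a => //.
by have := morph_window f_unif 1 i w; rewrite mul1n def_a morph_seq1.
Qed.

Lemma morph_straddle w i r : i.+1 < size w -> r <= m ->
  exists b b', take m (drop (i * m + r) (morph f w)) = take m (drop r (f b ++ f b')).
Proof.
move=> lt_i le_rm; have [b def_b] := take1_drop (ltnW lt_i).
have [b' def_b'] := take1_drop lt_i; exists b, b'.
rewrite addnC -drop_drop -(@take_drop_take _ _ (2 * m)); last lia.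
rewrite morph_window // -add1n takeD drop_drop add1n def_b def_b' /=.
by rewrite morph_cons morph_seq1.
Qed.

Lemma morph_square_dvd w p L :
  square_at (morph f w) p L -> 2 * m <= L.+1 -> m %| L.
Proof.
move=> sq long; have /and3P[_ le_s _] := sq; rewrite (size_morph f_unif) in le_s.
have [c /andP[le_pc lt_cp]] := exists_mul_in p.
(* The block at c * m lies in the first half of the square; its copy L letters
   later straddles two blocks unless m divides L. *)
have fit : c * m - p + m <= L by lia.
have := square_at_window sq fit; rewrite addnAC subnKC //.
have [|a _ ->] := @morph_letter w c; first by rewrite -(ltn_pmul2r m_gt0); lia.
rewrite /dvdn; case: posnP => // r_gt0; have r_lt := ltn_pmod L m_gt0.
have def_cL : c * m + L = (c + L %/ m) * m + L %% m by rewrite mulnDl -addnA -divn_eq.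
rewrite def_cL.
have [|b [b' ->]] := @morph_straddle w (c + L %/ m) _ _ (ltnW r_lt).
  by rewrite -(ltn_pmul2r m_gt0) mulSn; lia.
move=> eq_a; have := f_sync b b' a (r := L %% m).
by rewrite r_gt0 r_lt -eq_a eqxx => /(_ isT).
Qed.

Lemma morph_square_long w p L :
  square_at (morph f w) p L -> 2 * m <= L.+1 -> has_square w.
Proof.
move=> sq long; have /and3P[L_gt0 le_s _] := sq; rewrite (size_morph f_unif) in le_s.
have /dvdnP[q def_L] := morph_square_dvd sq long.
have [c /andP[le_pc lt_cp]] := exists_mul_in p.
have le_2q : c + 2 * q <= size w.
  have e : (c + 2 * q) * m = c * m + 2 * L by rewrite def_L mulnDl mulnA.
  by rewrite -ltnS -(ltn_pmul2r m_gt0) e [_.+1 * m]mulSn; lia.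
apply/has_squareP; exists c, q; apply/and3P; split=> //.
  by move: L_gt0; rewrite def_L muln_gt0 => /andP[].
(* Blocks c + t and c + q + t start in the two halves, L letters apart, so they
   have the same first letter. *)
apply/eqP/eq_take_drop => t lt_tq.
have [|a def_a blk_a] := @morph_letter w (c + t); first lia.
have [|a' def_a' blk_a'] := @morph_letter w (c + q + t); first lia.
rewrite def_a def_a'; congr [:: _]; apply: f_head_inj => /=.
have fit : (c + t) * m - p + 1 <= L by rewrite def_L mulnDl; nia.
have := square_at_window sq fit; rewrite addnAC subnKC ?mulnDl //; last lia.
by rewrite def_L -!mulnDl addnAC -blk_a -blk_a' !take_takel.
Qed.

Lemma morph_square_short w p L :
  square_at (morph f w) p L -> L.+1 < 2 * m -> has_square w.
Proof.
move=> sq short; apply: (@has_square_factor _ 5 (p %/ m)).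
apply: f_short; first by rewrite size_take_min geq_minl.
apply/has_squareP; exists (p %% m), L.
rewrite -(morph_window f_unif) square_at_take; last by have := ltn_pmod p m_gt0; lia.
by rewrite square_at_drop -divn_eq.
Qed.

Theorem square_free_morph w : square_free w -> square_free (morph f w).
Proof.
move/square_freeP=> sf_w; apply/square_freeP; apply: contra sf_w => /has_squareP[p [L sq]].
by case: (ltnP L.+1 (2 * m)) => [/(morph_square_short sq)|/(morph_square_long sq)].
Qed.

End Criterion.

Section Decision.
Variables (S : eqType) (al : seq S).
Hypothesis al_full : forall a, a \in al.

Fixpoint words n : seq (seq S) :=
  if n is n'.+1 then [seq a :: u | a <- al, u <- words n'] else [:: [::]].

Lemma mem_words u : u \in words (size u).
Proof.
elim: u => [|a u IH]; first by rewrite mem_seq1.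
by apply/allpairsP; exists (a, u); rewrite al_full.
Qed.

Lemma all_injective (R : eqType) (g : S -> R) :
  all (fun a => all (fun b => (g a == g b) ==> (a == b)) al) al -> injective g.
Proof.
move/allP=> g_inj a b /eqP eq_g.
by move/allP: (g_inj a (al_full a)) => /(_ b (al_full b))/implyP/(_ eq_g)/eqP.
Qed.

Variables (T : eqType) (f : S -> seq T) (m : nat).

Lemma all_uniform : all (fun a => size (f a) == m) al -> uniform f m.
Proof. by move/allP=> unif a; apply/eqP/unif. Qed.

Lemma square_free_morph_check :
    0 < m -> all (fun a => size (f a) == m) al ->
    all (fun a => all (fun b => all (fun c => all (fun r =>
      take m (drop r (f a ++ f b)) != f c) (iota 1 m.-1)) al) al) al ->
    all (fun a => all (fun b => (take 1 (f a) == take 1 (f b)) ==> (a == b)) al) al ->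
    all (fun k => all (fun u => ~~ has_square (morph f u)) [seq u <- words k | ~~ has_square u])
      (iota 0 6) ->
  forall w, square_free w -> square_free (morph f w).
Proof.
move=> m_gt0 /all_uniform unif sync /all_injective head_inj short.
apply: square_free_morph m_gt0 unif _ head_inj _ => [a b c r /andP[r_gt0 r_lt]|u le_u5].
  move/allP: sync => /(_ a (al_full a))/allP/(_ b (al_full b))/allP/(_ c (al_full c)).
  by move/allP; apply; rewrite mem_iota; lia.
move/allP: short => /(_ (size u)); rewrite mem_iota => /(_ le_u5).
move/allP=> sf_image sq_image; apply/negPn/negP => sf_u.
by move: (sf_image u); rewrite mem_filter sf_u mem_words => /(_ isT)/negP.
Qed.

End Decision.

Section Amplification.
Variable T : eqType.

Definition reducts_led_by (W R0 : seq T) (s : seq (seq T)) :=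
  [/\ 0 < size R0, {in s, forall R, size R <= size R0}, uniq (R0 :: s)
    & {in R0 :: s, forall R, is_reduct W R}].

Variables (D g h : T -> seq T) (m n : nat).
Hypotheses (m_gt0 : 0 < m) (lt_mn : m < n)
  (h_unif : uniform h m) (g_unif : uniform g n) (h_inj : injective h)
  (h_sf : forall w, square_free w -> square_free (morph h w))
  (g_sf : forall w, square_free w -> square_free (morph g w))
  (D_h : forall a, sq_reduces (D a) (h a)) (D_g : forall a, sq_reduces (D a) (g a)).

Lemma reducts_led_by_morph W R0 s : reducts_led_by W R0 s ->
  reducts_led_by (morph D W) (morph g R0) (map (morph h) (R0 :: s)).
Proof.
case=> R0_gt0 R0_max uniq_s red_s.
have h_nz a : h a != [::] by rewrite -size_eq0 h_unif -lt0n.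
have g_nz a : g a != [::] by rewrite -size_eq0 g_unif -lt0n; case: n lt_mn.
have shorter : {in R0 :: s, forall R, size (morph h R) < size (morph g R0)}.
  move=> R; rewrite (size_morph h_unif) (size_morph g_unif).
  rewrite inE => /predU1P[->|/R0_max le_R]; first by rewrite ltn_pmul2l.
  apply: (@leq_ltn_trans (size R0 * m)); first by rewrite leq_mul2r le_R orbT.
  by rewrite ltn_pmul2l.
split.
- by rewrite (size_morph g_unif) muln_gt0 R0_gt0; case: n lt_mn.
- by move=> _ /mapP[R R_s ->]; apply/ltnW/shorter.
- rewrite cons_uniq (map_inj_uniq (morph_inj h_unif m_gt0 h_inj)) uniq_s andbT.
  by apply/mapP=> -[R R_s eq_gR]; have := shorter R R_s; rewrite -eq_gR ltnn.
move=> R'; rewrite inE => /predU1P[->|/mapP[R R_s ->]]; apply: is_reduct_morph => //.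
  exact/red_s/mem_head.
exact: red_s.
Qed.

Theorem exists_r_ge (a : T) k : exists W : seq T, r_ge W k.
Proof.
suff [W [R0 [s [[_ _ uniq_s red_s] le_k]]]] :
    exists W R0 s, reducts_led_by W R0 s /\ k <= size s.
  by exists W, (R0 :: s); do !split=> //; apply: leqW.
elim: k => [|k [W [R0 [s [led le_k]]]]].
  exists [:: a], [:: a], [::]; split=> //; split=> // R; rewrite mem_seq1 => /eqP->.
  by split; [apply: sq_refl | apply/square_freeP].
exists (morph D W), (morph g R0), (map (morph h) (R0 :: s)).
by split; [exact: reducts_led_by_morph | rewrite size_map].
Qed.

End Amplification.

Lemma abab_reduces (T : eqType) (a b c d : seq T) : a != [::] ->
  sq_reduces (a ++ b ++ a ++ b ++ c ++ b ++ a ++ b ++ c ++ d) (a ++ b ++ c ++ d) /\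
  sq_reduces (a ++ b ++ a ++ b ++ c ++ b ++ a ++ b ++ c ++ d)
             (a ++ b ++ c ++ b ++ a ++ b ++ c ++ d).
Proof.
rewrite -size_eq0 => nz_a.
have nz_ab : a ++ b != [::] by rewrite -size_eq0 size_cat; lia.
split; last by have := sq_reduces_square [::] (c ++ b ++ a ++ b ++ c ++ d) nz_ab; rewrite -!catA.
apply: (@sq_reduces_trans _ _ (a ++ b ++ a ++ b ++ c ++ d)).
  have nz_baba : b ++ a ++ b ++ c != [::] by rewrite -size_eq0 !size_cat; lia.
  by have := sq_reduces_square a d nz_baba; rewrite -!catA.
by have := sq_reduces_square [::] (c ++ d) nz_ab; rewrite -!catA.
Qed.

(* [ord3 i] is [i mod 3]; unlike [inord], it evaluates under [vm_compute]. *)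
Definition ord3 (i : nat) : 'I_3 := Ordinal (ltn_pmod i (isT : 0 < 3)).

Definition I3 : seq 'I_3 := [:: ord3 0; ord3 1; ord3 2].

Lemma mem_I3 a : a \in I3.
Proof. by case: a => [[|[|[|i]]] lt_i]. Qed.

(* Leech's morphism maps 0 to 0121021201210 and commutes with x |-> x + 1 mod 3. *)
Definition rot3 (x : 'I_3) (s : seq nat) : seq 'I_3 := [seq ord3 (i + x) | i <- s].

Definition leechA x := rot3 x [:: 0; 1].
Definition leechB x := rot3 x [:: 2; 1; 0; 2].
Definition leechC x := rot3 x [:: 1; 2; 0].
Definition leechD x := rot3 x [:: 1; 2; 1; 0].

Definition h13 x := leechA x ++ leechB x ++ leechC x ++ leechD x.
Definition g26 x :=
  leechA x ++ leechB x ++ leechC x ++ leechB x ++ leechA x ++ leechB x ++ leechC x ++ leechD x.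
Definition d32 x := leechA x ++ leechB x ++ leechA x ++ leechB x ++ leechC x ++
  leechB x ++ leechA x ++ leechB x ++ leechC x ++ leechD x.

Lemma d32_reduces_h13 x : sq_reduces (d32 x) (h13 x).
Proof. by case: (abab_reduces (leechB x) (leechC x) (leechD x) (isT : leechA x != [::])). Qed.

Lemma d32_reduces_g26 x : sq_reduces (d32 x) (g26 x).
Proof. by case: (abab_reduces (leechB x) (leechC x) (leechD x) (isT : leechA x != [::])). Qed.

Lemma h13_inj : injective h13.
Proof. by apply: (all_injective mem_I3). Qed.

Lemma h13_square_free w : square_free w -> square_free (morph h13 w).
Proof. by move: w; apply: (@square_free_morph_check _ _ mem_I3 _ _ 13); vm_compute. Qed.

Lemma g26_square_free w : square_free w -> square_free (morph g26 w).
Proof. by move: w; apply: (@square_free_morph_check _ _ mem_I3 _ _ 26); vm_compute. Qed.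

Theorem theorem2p4 : forall k : nat, 1 <= k ->
  exists W : seq 'I_3, r_ge W k.
Proof.
move=> k _; apply: (@exists_r_ge _ d32 g26 h13 13 26) => //.
- exact: h13_inj.
- exact: h13_square_free.
- exact: g26_square_free.
- exact: d32_reduces_h13.
- exact: d32_reduces_g26.
exact: ord3 0.
Qed.
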